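(* Let $A$ be a Banach lattice algebra and let $\{p_\lambda\}_{\lambda\in\Lambda}\subseteq BP_l(A)\cap BP_r(A)$ satisfy $p_\alpha p_\beta=\delta_{\alpha\beta}p_\alpha$ for all $\alpha,\beta\in\Lambda$. If $\Phi\subseteq\Lambda\times\Lambda$ is finite, then for all $x\in A_+$, \[\bigvee_{(\alpha,\beta)\in\Phi}p_\alpha x p_\beta=\sum_{(\alpha,\beta)\in\Phi}p_\alpha x p_\beta .\]
   Context: A Banach lattice algebra is a real Banach lattice $A$ equipped with an associative bilinear product making $(A,\cdot)$ a Banach algebra ($\|xy\|\le\|x\|\|y\|$) such that $xy\ge 0$ whenever $x,y\ge0$. For $a\in A$, $L_a,R_a\colon A\to A$ denote $L_a(x)=ax$, $R_a(x)=xa$. A band projection on a Banach lattice $X$ is an operator $P\colon X\to X$ with $P^2=P$ and $0\le P\le I_X$. $BP_l(A)=\{a\in A_+: L_a \text{ is a band projection}\}$, $BP_r(A)=\{a\in A_+: R_a\text{ is a band projection}\}$. $\delta_{\alpha\beta}$ is the Kronecker delta. *)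

From HB Require Import structures.
From mathcomp Require Import all_boot all_order all_algebra.
From mathcomp Require Import finmap.
From mathcomp Require Import all_classical all_reals all_analysis.
Set Implicit Arguments. Unset Strict Implicit. Unset Printing Implicit Defensive.
Import Order.TTheory GRing.Theory Num.Theory.
Import numFieldNormedType.Exports.
Local Open Scope ring_scope.

Record BLA (R : realType) (V : completeNormedModType R) := {
  ble : V -> V -> Prop;
  bjoin : V -> V -> V;
  bmeet : V -> V -> V;
  bmul : V -> V -> V;
  ble_refl : forall x, ble x x;
  ble_anti : forall x y, ble x y -> ble y x -> x = y;
  ble_trans : forall x y z, ble x y -> ble y z -> ble x z;
  bjoin_ubl : forall x y, ble x (bjoin x y);
  bjoin_ubr : forall x y, ble y (bjoin x y);
  bjoin_least : forall x y z, ble x z -> ble y z -> ble (bjoin x y) z;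
  bmeet_lbl : forall x y, ble (bmeet x y) x;
  bmeet_lbr : forall x y, ble (bmeet x y) y;
  bmeet_greatest : forall x y z, ble z x -> ble z y -> ble z (bmeet x y);
  ble_add : forall x y z, ble x y -> ble (x + z) (y + z);
  ble_scale : forall (t : R) x, 0 <= t -> ble 0 x -> ble 0 (t *: x);
  (* lattice norm: |x| <= |y| implies ||x|| <= ||y||, with |x| = x v (-x) *)
  blattice_norm : forall x y,
      ble (bjoin x (- x)) (bjoin y (- y)) -> `|x| <= `|y|;
  bmulA : forall x y z, bmul x (bmul y z) = bmul (bmul x y) z;
  bmulDl : forall x y z, bmul (x + y) z = bmul x z + bmul y z;
  bmulDr : forall x y z, bmul x (y + z) = bmul x y + bmul x z;
  bmulZl : forall (t : R) x y, bmul (t *: x) y = t *: bmul x y;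
  bmulZr : forall (t : R) x y, bmul x (t *: y) = t *: bmul x y;
  bmul_norm : forall x y, `|bmul x y| <= `|x| * `|y|;
  bmul_ge0 : forall x y, ble 0 x -> ble 0 y -> ble 0 (bmul x y)
}.

Section BP.
Variables (R : realType) (V : completeNormedModType R) (A : BLA V).

Definition band_projection (P : V -> V) : Prop :=
  (forall x, P (P x) = P x) /\
  (forall x, ble A 0 x -> ble A 0 (P x) /\ ble A (P x) x).

Definition BP_l (a : V) : Prop :=
  ble A 0 a /\ band_projection (fun x => bmul A a x).
Definition BP_r (a : V) : Prop :=
  ble A 0 a /\ band_projection (fun x => bmul A x a).

(* Supremum of a finite family (indexed by a sequence) via iterated join,
   starting from 0 (only used for families of positive elements, where this
   coincides with the lattice supremum when the family is nonempty). *)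
Definition fin_sup (I : Type) (s : seq I) (f : I -> V) : V :=
  \big[bjoin A/0]_(i <- s) f i.
End BP.

From HB Require Import structures.
From mathcomp Require Import all_boot all_order all_algebra.
From mathcomp Require Import finmap.
From mathcomp Require Import all_classical all_reals all_analysis.
Import Order.TTheory GRing.Theory Num.Theory.
Local Open Scope ring_scope.

(* In a vector lattice [u \/ v = u + v - u /\ v], so a finite join of pairwise
   disjoint positive elements is their sum.  The compressions
   [z |-> p_a z p_b] are positive contractions, and by orthogonality of the
   [p_l] the compression by [(a, b)] fixes [p_a x p_b] and kills [p_c x p_d]
   for [(c, d) <> (a, b)]; an element fixed by a positive contraction is
   disjoint from a positive element it kills, which gives the disjointness. *)

Set Implicit Arguments.
Unset Strict Implicit.

Section VectorLattice.
Variables (R : realType) (V : completeNormedModType R) (A : BLA V).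
Local Notation le := (ble A).

Lemma ble_subr_ge0 x y : le 0 (y - x) <-> le x y.
Proof.
split; first by move/(ble_add x); rewrite add0r subrK.
by move/(ble_add (- x)); rewrite subrr.
Qed.

Lemma bleD x y z w : le x y -> le z w -> le (x + z) (y + w).
Proof.
move=> lexy lezw; apply: (ble_trans (ble_add z lexy)).
by rewrite ![y + _]addrC; apply: ble_add.
Qed.

Lemma ble_sum_ge0 (I : Type) (s : seq I) (F : I -> V) :
  (forall i, le 0 (F i)) -> le 0 (\sum_(i <- s) F i).
Proof.
move=> F_ge0; apply: (big_ind (le 0)) => //; first exact: ble_refl.
by move=> y z y_ge0 z_ge0; rewrite -(addr0 0); apply: bleD.
Qed.

Lemma bjoinE u v : bjoin A u v = u + v - bmeet A u v.
Proof.
set j := bjoin A u v; set m := bmeet A u v.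
apply: ble_anti.
- apply: bjoin_least; apply/ble_subr_ge0.
  + rewrite addrAC (addrAC u) subrr add0r; exact/ble_subr_ge0/bmeet_lbr.
  + rewrite addrAC addrK; exact/ble_subr_ge0/bmeet_lbl.
- apply/ble_subr_ge0.
  have -> : j - (u + v - m) = m - (u + v - j) by rewrite !opprB addrCA.
  apply/ble_subr_ge0/bmeet_greatest; apply/ble_subr_ge0.
  + rewrite opprB opprD addrCA addNKr; exact/ble_subr_ge0/bjoin_ubr.
  + rewrite (addrC u) opprB opprD addrCA addNKr; exact/ble_subr_ge0/bjoin_ubl.
Qed.

Lemma bjoin_disjoint u v : bmeet A u v = 0 -> bjoin A u v = u + v.
Proof. by move=> uv0; rewrite bjoinE uv0 subr0. Qed.

Lemma bmeet_eq0_contraction (P : V -> V) u v :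
  {morph P : y z / y - z} ->
  (forall z, le 0 z -> le 0 (P z)) -> (forall z, le 0 z -> le (P z) z) ->
  le 0 u -> le 0 v -> P u = u -> P v = 0 -> bmeet A u v = 0.
Proof.
move=> PB P_ge0 P_le u_ge0 v_ge0 Pu Pv; set w := bmeet A u v.
have w_ge0 : le 0 w by apply: bmeet_greatest.
have Pw0 : P w = 0.
  apply: ble_anti (P_ge0 _ w_ge0); rewrite -Pv; apply/ble_subr_ge0.
  by rewrite -PB; apply/P_ge0/ble_subr_ge0/bmeet_lbr.
have : le (P (u - w)) (u - w) by apply/P_le/ble_subr_ge0/bmeet_lbl.
rewrite PB Pu Pw0 subr0 => /ble_subr_ge0; rewrite addrAC subrr.
by move/ble_subr_ge0/ble_anti; apply.
Qed.

Lemma bmulNl x y : bmul A (- x) y = - bmul A x y.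
Proof. by rewrite -scaleN1r bmulZl scaleN1r. Qed.

Lemma bmulNr x y : bmul A x (- y) = - bmul A x y.
Proof. by rewrite -scaleN1r bmulZr scaleN1r. Qed.

Lemma bmul0l y : bmul A 0 y = 0.
Proof. by rewrite -[X in bmul A X _](@scale0r R V 0) bmulZl scale0r. Qed.

Lemma bmul0r x : bmul A x 0 = 0.
Proof. by rewrite -[X in bmul A _ X](@scale0r R V 0) bmulZr scale0r. Qed.

End VectorLattice.

Section Compression.
Variables (R : realType) (V : completeNormedModType R) (A : BLA V).
Variables (Lambda : choiceType) (p : Lambda -> V).
Hypothesis hp : forall l, BP_l A (p l) /\ BP_r A (p l).
Hypothesis horth : forall a b : Lambda,
  bmul A (p a) (p b) = if a == b then p a else 0.
Local Notation le := (ble A).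
Local Notation "x * y" := (bmul A x y).

Definition compress a b z := p a * z * p b.

Lemma compressD a b : {morph compress a b : y z / y + z}.
Proof. by move=> y z; rewrite /compress bmulDr bmulDl. Qed.

Lemma compressB a b : {morph compress a b : y z / y - z}.
Proof. by move=> y z; rewrite /compress bmulDr bmulDl bmulNr bmulNl. Qed.

Lemma compress0 a b : compress a b 0 = 0.
Proof. by rewrite -[X in compress _ _ X](subrr 0) compressB subrr. Qed.

Lemma compress_ge0 a b z : le 0 z -> le 0 (compress a b z).
Proof.
have p_ge0 l : le 0 (p l) by case: (hp l) => [[]].
by move=> z_ge0; apply: bmul_ge0 => //; apply: bmul_ge0.
Qed.

Lemma compress_le a b z : le 0 z -> le (compress a b z) z.
Proof.
move=> z_ge0; case: (hp a) => [[_ [_ La]] _]; case: (hp b) => [_ [_ [_ Rb]]].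
have [paz_ge0 paz_le] := La z z_ge0.
exact: ble_trans (proj2 (Rb _ paz_ge0)) paz_le.
Qed.

Lemma compress_compress a b c d z :
  compress a b (compress c d z) = if (a, b) == (c, d) then compress a b z else 0.
Proof.
have -> : compress a b (compress c d z) = p a * p c * z * (p d * p b).
  by rewrite /compress !bmulA.
rewrite !horth xpair_eqE [d == b]eq_sym.
case: (a == c); last by rewrite !bmul0l.
by case: (b =P d) => [->|_]; rewrite ?bmul0r.
Qed.

Lemma fin_sup_compress (s : seq (Lambda * Lambda)) x : uniq s -> le 0 x ->
  fin_sup A s (fun ab => compress ab.1 ab.2 x) =
  \sum_(ab <- s) compress ab.1 ab.2 x.
Proof.
move=> + x_ge0; elim: s => [|[a b] s IH]; first by rewrite /fin_sup !big_nil.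
case/andP=> ab_notin_s uniq_s; rewrite /fin_sup !big_cons -/(fin_sup _ _ _).
rewrite IH // bjoin_disjoint //=.
apply: (bmeet_eq0_contraction (compressB a b)).
- exact: compress_ge0.
- exact: compress_le.
- exact: compress_ge0.
- by apply: ble_sum_ge0 => ?; apply: compress_ge0.
- by rewrite compress_compress eqxx.
rewrite (big_morph _ (compressD a b) (compress0 a b)) big1_seq // => -[c d].
case/andP=> _ cd_in_s; rewrite compress_compress.
by case: eqP cd_in_s => // <-; rewrite (negbTE ab_notin_s).
Qed.

End Compression.

Local Open Scope fset_scope.

Theorem mainTheorem2 (R : realType) (V : completeNormedModType R) (A : BLA V)
  (Lambda : choiceType) (p : Lambda -> V)
  (hp : forall l, BP_l A (p l) /\ BP_r A (p l))
  (horth : forall a b : Lambda,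
      bmul A (p a) (p b) = if a == b then p a else 0)
  (Phi : {fset Lambda * Lambda}) (x : V) (hx : ble A 0 x) :
  fin_sup A Phi (fun ab => bmul A (bmul A (p ab.1) x) (p ab.2)) =
  \sum_(ab <- Phi) bmul A (bmul A (p ab.1) x) (p ab.2).
Proof. exact: (fin_sup_compress hp horth (fset_uniq Phi) hx : fin_sup A Phi _ = _). Qed.
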